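(* Fix integers $N\ge 2$ and $K\ge 1$. For any Boolean tensor $\mathcal{B}\in\{0,1\}^{N\times N\times K}$ with frontal slices $\mathbf{B}_1,\dots,\mathbf{B}_K$, and any $r\in\mathbb{N}^+$ with \[ r\ge\min\Big\{2KN+1,\;4\sum_{k=1}^K\mathrm{rrank}(\mathbf{B}_k)+1\Big\},\] the set $\pi(\mathcal{M}^{\text{HolE}}_r)$ contains a ranking tensor consistent with $\mathcal{B}$.
   Context: A score-based model assigns a score $s_k(i,j)\in\mathbb{R}$ to each triple, $i,j\in\{1,\dots,N\}$, $k\in\{1,\dots,K\}$; its scoring tensor has frontal slices $\mathbf{S}_k$ with $[\mathbf{S}_k]_{ij}=s_k(i,j)$. For a real $N\times N$ matrix $\mathbf{S}$, $\pi(\mathbf{S})$ is the matrix of dense ranks: $\pi_{ij}(\mathbf{S})=1+$ (number of distinct values among entries of $\mathbf{S}$ strictly larger than $s_{ij}$). For tensors, $\pi$ acts slicewise; for a set $X$, $\pi(X)=\{\pi(x):x\in X\}$. HolE of size $r$: parameters $\mathbf{A}\in\mathbb{R}^{N\times r}$ (rows $\mathbf{a}_i$), $\mathbf{R}\in\mathbb{R}^{K\times r}$ (rows $\mathbf{r}_k$), score $\mathbf{r}_k^T(\mathbf{a}_i\star\mathbf{a}_j)$ where $(\mathbf{a}\star\mathbf{b})_m=\sum_{t=1}^r a_t\, b_{((m+t-2)\bmod r)+1}$ is circular correlation; $\mathcal{M}^{\text{HolE}}_r$ is the set of scoring tensors of such models. A ranking tensor $\mathcal{P}$ is consistent with $\mathcal{B}$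 if for every $k$ and all $i,j,i',j'$: $b_{ijk}=1$ and $b_{i'j'k}=0$ imply $p_{ijk}<p_{i'j'k}$. Rounding rank: $\mathrm{round}$ maps each entry $x$ of a real matrix to $1$ if $x\ge 1/2$ and to $0$ otherwise; for $\mathbf{B}\in\{0,1\}^{m\times n}$, $\mathrm{rrank}(\mathbf{B})=\min\{\mathrm{rank}(\mathbf{A}):\mathbf{A}\in\mathbb{R}^{m\times n},\ \mathrm{round}(\mathbf{A})=\mathbf{B}\}$. *)

From HB Require Import structures.
From mathcomp Require Import all_boot all_order all_algebra.
From mathcomp Require Import boolp reals.
Set Implicit Arguments. Unset Strict Implicit. Unset Printing Implicit Defensive.
Import Order.TTheory GRing.Theory Num.Theory.
Local Open Scope ring_scope.

Section Defs.
Variable R : realType.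

Definition round_mx m n (A : 'M[R]_(m, n)) : 'M[bool]_(m, n) :=
  map_mx (fun x => (1 / 2 <= x)) A.

Definition rrank_pred m n (B : 'M[bool]_(m, n)) (k : nat) : bool :=
  `[< exists A : 'M[R]_(m, n), round_mx A = B /\ \rank A = k >].

Lemma rrank_ex m n (B : 'M[bool]_(m, n)) : exists k, rrank_pred B k.
Proof.
exists (\rank (map_mx (fun b : bool => (b : nat)%:R : R) B)).
apply/asboolP; exists (map_mx (fun b : bool => (b : nat)%:R : R) B); split => //.
apply/matrixP => i j; rewrite !mxE.
case: (B i j) => /=.
- by rewrite ler_pdivrMr // mul1r ler1n.
- by apply/negbTE; rewrite -ltNge divr_gt0.
Qed.

Definition rrank m n (B : 'M[bool]_(m, n)) : nat := ex_minn (rrank_ex B).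

(* 0-indexed access into a length-r vector (default 0, never used when the
   index is < r) *)
Definition vget r (b : 'I_r -> R) (k : nat) : R :=
  if insub k is Some j then b j else 0.

(* circular correlation, 0-indexed: (a * b)_m = sum_t a_t b_{(m+t) mod r},
   which is the paper's 1-indexed formula b_{((m+t-2) mod r)+1} *)
Definition ccorr r (a b : 'I_r -> R) (m : 'I_r) : R :=
  \sum_(t < r) a t * vget b ((m + t) %% r).

Definition holE_tensor N K r (A : 'M[R]_(N, r)) (Rm : 'M[R]_(K, r))
  : 'I_K -> 'M[R]_N :=
  fun k => \matrix_(i < N, j < N)
     \sum_(m < r) Rm k m * ccorr (fun t => A i t) (fun t => A j t) m.

Definition is_HolE N K r (S : 'I_K -> 'M[R]_N) : Prop :=
  exists (A : 'M[R]_(N, r)) (Rm : 'M[R]_(K, r)), S = holE_tensor A Rm.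

Definition dense_rank N (S : 'M[R]_N) : 'M[nat]_N :=
  \matrix_(i < N, j < N)
    (1 + size (undup [seq S p.1 p.2 | p <- enum [set: 'I_N * 'I_N]
                                    & (S i j < S p.1 p.2)%R]))%N.

Definition pi_tensor N K (S : 'I_K -> 'M[R]_N) : 'I_K -> 'M[nat]_N :=
  fun k => dense_rank (S k).

Definition in_pi_HolE N K r (P : 'I_K -> 'M[nat]_N) : Prop :=
  exists S : 'I_K -> 'M[R]_N, is_HolE r S /\ P = pi_tensor S.

End Defs.

Definition consistent N K (B : 'I_K -> 'M[bool]_N) (P : 'I_K -> 'M[nat]_N)
  : Prop :=
  forall (k : 'I_K) (i j i' j' : 'I_N),
    B k i j = true -> B k i' j' = false -> (P k i j < P k i' j')%N.

From HB Require Import structures.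
From mathcomp Require Import all_boot all_order all_algebra.
From mathcomp Require Import boolp reals trigo.
From mathcomp Require Import ring lra zify.

(* HolE of size r simulates ComplEx of any dimension d with 2 d < r.  Give entity i
   the trigonometric polynomial a_i(t) = sum_p (al_ip cos(w_p t) + be_ip sin(w_p t))
   with distinct angular frequencies w_p = 2 pi f_p / r, 0 < f_p < r / 2.  By the
   orthogonality of these waves over t < r, the circular correlation of a_i and a_j is
   again such a polynomial, with the coefficients of conj(e_i) e_j (e_i = al_i + i be_i);
   pairing it with a relation vector built the same way yields the ComplEx score.  It
   remains to separate the 1-entries from the 0-entries of each slice by a ComplEx
   score of small dimension: with d = 2 sum_k rrank B_k the score reproduces matrices
   A_k = U_k V_k that round to B_k, and with d = K N one coordinate per row of each
   slice gives the score M B_k(i,j) plus a diagonal term of the right sign and an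
   error of at most N / 2, for M = N + 1. *)

Set Implicit Arguments. Unset Strict Implicit. Unset Printing Implicit Defensive.
Import Order.TTheory GRing.Theory Num.Theory.
Local Open Scope ring_scope.

Lemma sumr_delta (R : pzSemiRingType) (I : finType) (i : I) (F : I -> R) :
  \sum_j (i == j)%:R * F j = F i.
Proof.
rewrite (bigD1 i) //= eqxx mul1r big1 ?addr0 // => j /negbTE.
by rewrite eq_sym => ->; rewrite mul0r.
Qed.

Section DiscreteOrthogonality.
Variable R : realType.

Lemma sin_pi_frac_gt0 (d r : nat) : (0 < d < r)%N -> 0 < sin (pi * (d%:R / r%:R)) :> R.
Proof.
case/andP=> d_gt0 d_lt_r; have r_gt0 : (0 < r)%N by lia.
apply: sin_gt0_pi; rewrite mulr_gt0 ?pi_gt0 ?divr_gt0 ?ltr0n //=.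
by rewrite gtr_pMr ?pi_gt0 // ltr_pdivrMr ?ltr0n // mul1r ltr_nat.
Qed.

Lemma sum_cos_freq_phase_eq0 (r d : nat) (phi : R) : (0 < d < r)%N ->
  \sum_(t < r) cos (pi *+ 2 * (d%:R / r%:R) * t%:R + phi) = 0.
Proof.
move=> d_bounds; have sin_gt0 := sin_pi_frac_gt0 d_bounds.
have r_neq0 : r%:R != 0 :> R by rewrite pnatr_eq0; lia.
set x := d%:R / r%:R in sin_gt0 *.
pose g (t : nat) := sin (pi *+ 2 * x * t%:R + phi - pi * x).
(* 2 sin(a) cos(b) = sin(b + a) - sin(b - a) makes the sum telescope *)
have telescope t : cos (pi *+ 2 * x * t%:R + phi) * (sin (pi * x) *+ 2) = g t.+1 - g t.
  rewrite /g; have -> : pi *+ 2 * x * t.+1%:R + phi - pi * x =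
                        pi *+ 2 * x * t%:R + phi + pi * x.
    by rewrite -natr1; ring.
  by rewrite sinD sinB; ring.
have sin2_neq0 : sin (pi * x) *+ 2 != 0 by rewrite -mulr_natr mulf_neq0 ?gt_eqF ?pnatr_eq0.
apply: (mulIf sin2_neq0).
rewrite mul0r mulr_suml (eq_bigr (fun t : 'I_r => g t.+1 - g t)) => [|t _];
  last exact: telescope.
rewrite -(big_mkord xpredT (fun t => g t.+1 - g t)) telescope_sumr // /g mulr0 add0r.
have -> : pi *+ 2 * x * r%:R + phi - pi * x = phi - pi * x + (pi *+ 2) *+ d.
  by rewrite /x -mulr_natr; field.
by rewrite periodicn ?subrr //; exact: sinD2pi.
Qed.

Lemma sum_cos_freqB_phase_eq0 (r a b : nat) (phi : R) :
  a != b -> (a < r)%N -> (b < r)%N ->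
  \sum_(t < r) cos (pi *+ 2 * ((a%:R - b%:R) / r%:R) * t%:R + phi) = 0.
Proof.
move=> ab a_lt b_lt.
wlog lt_ba : a b phi ab a_lt b_lt / (b < a)%N => [sym|].
  case: (ltngtP a b) ab => [lt_ab _|lt_ba _|->]; [|by apply: sym; rewrite ?gtn_eqF|by []].
  rewrite -[RHS](sym b a (- phi)) ?gtn_eqF //.
  by apply: eq_bigr => t _; rewrite -cosN; congr cos; ring.
rewrite -(natrB _ (ltnW lt_ba)); apply: sum_cos_freq_phase_eq0; lia.
Qed.

Lemma sum_cos_freqB_eq0 (r a b : nat) : a != b -> (a < r)%N -> (b < r)%N ->
  \sum_(t < r) cos (pi *+ 2 * ((a%:R - b%:R) / r%:R) * t%:R) = 0 :> R.
Proof.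
move=> ab a_lt b_lt; rewrite -[RHS](sum_cos_freqB_phase_eq0 0 ab a_lt b_lt).
by apply: eq_bigr => t _; rewrite addr0.
Qed.

Lemma sum_sin_freqB_eq0 (r a b : nat) : a != b -> (a < r)%N -> (b < r)%N ->
  \sum_(t < r) sin (pi *+ 2 * ((a%:R - b%:R) / r%:R) * t%:R) = 0 :> R.
Proof.
move=> ab a_lt b_lt; rewrite -[RHS](sum_cos_freqB_phase_eq0 (- (pi / 2)) ab a_lt b_lt).
by apply: eq_bigr => t _; rewrite cosBpihalf.
Qed.

End DiscreteOrthogonality.

(* Re <w_k, e_i, conj e_j> for e_i = al i + i be i and w_k = CA k + i CB k. *)
Definition complex_score (R : pzRingType) (T : finType) (N K : nat)
    (al be : 'I_N -> T -> R) (CA CB : 'I_K -> T -> R) (k : 'I_K) (i j : 'I_N) : R :=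
  \sum_p ((al i p * al j p + be i p * be j p) * CA k p
          + (al i p * be j p - be i p * al j p) * CB k p).

Section TrigEmbedding.
Variables (R : realType) (r : nat) (T : finType) (f : T -> nat).
Hypotheses (r_gt0 : (0 < r)%N) (f_inj : injective f).
Hypotheses (f_gt0 : forall p, (0 < f p)%N) (f_lt : forall p, (2 * f p < r)%N).

Definition freq (p : T) : R := pi *+ 2 * ((f p)%:R / r%:R).

Lemma sum_wave_mul p q (a b c d : R) :
  \sum_(t < r) (a * cos (freq p * t%:R) + b * sin (freq p * t%:R)) *
               (c * cos (freq q * t%:R) + d * sin (freq q * t%:R))
  = (p == q)%:R * (r%:R / 2 * (a * c + b * d)).
Proof.
have prod_to_sum x y : (a * cos x + b * sin x) * (c * cos y + d * sin y) =
    ((a * c + b * d) * cos (x - y) + (b * c - a * d) * sin (x - y) +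
     (a * c - b * d) * cos (x + y) + (a * d + b * c) * sin (x + y)) / 2.
  by rewrite cosB sinB cosD sinD; field.
have angleB t : freq p * t%:R - freq q * t%:R =
    pi *+ 2 * (((f p)%:R - (f q)%:R) / r%:R) * t%:R by rewrite /freq; ring.
have angleD t : freq p * t%:R + freq q * t%:R =
    pi *+ 2 * (((f p + f q)%N%:R - 0%:R) / r%:R) * t%:R by rewrite natrD /freq; ring.
under eq_bigr do rewrite prod_to_sum angleB angleD.
rewrite -mulr_suml !big_split /= -!mulr_sumr.
have [fpq_neq0 fpq_lt] : (f p + f q != 0)%N /\ (f p + f q < r)%N.
  by have := f_gt0 p; have := f_lt p; have := f_lt q; split; lia.
have [fp_lt fq_lt] : (f p < r)%N /\ (f q < r)%N.
  by have := f_lt p; have := f_lt q; split; lia.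
rewrite (sum_cos_freqB_eq0 _ fpq_neq0 fpq_lt r_gt0).
rewrite (sum_sin_freqB_eq0 _ fpq_neq0 fpq_lt r_gt0).
have [<-|pq] := eqVneq p q.
  rewrite subrr mul0r mulr0 [X in (b * c - a * d) * X]big1 => [|t _];
    last by rewrite mul0r sin0.
  under eq_bigr do rewrite mul0r cos0.
  by rewrite sumr_const card_ord /=; field.
have fpq : f p != f q by apply: contra pq => /eqP /f_inj ->.
rewrite (sum_cos_freqB_eq0 _ fpq fp_lt fq_lt) (sum_sin_freqB_eq0 _ fpq fp_lt fq_lt).
by rewrite mul0r; field.
Qed.

Definition trig (a b : T -> R) (x : nat) : R :=
  \sum_p (a p * cos (freq p * x%:R) + b p * sin (freq p * x%:R)).

Lemma sum_trig_mul a b c d :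
  \sum_(t < r) trig a b t * trig c d t = r%:R / 2 * \sum_p (a p * c p + b p * d p).
Proof.
rewrite mulr_sumr /trig; under eq_bigr do rewrite mulr_suml.
rewrite exchange_big; apply: eq_bigr => p _.
under eq_bigr do rewrite mulr_sumr.
rewrite exchange_big -(sumr_delta p (fun q => r%:R / 2 * (a p * c q + b p * d q))).
by apply: eq_bigr => q _; rewrite (sum_wave_mul p q (a p) (b p) (c q) (d q)).
Qed.

Lemma trigD a b x m : trig a b (x + m) =
  trig (fun p => a p * cos (freq p * m%:R) + b p * sin (freq p * m%:R))
       (fun p => b p * cos (freq p * m%:R) - a p * sin (freq p * m%:R)) x.
Proof. by apply: eq_bigr => p _; rewrite natrD mulrDr cosD sinD; ring. Qed.

Lemma trig_mod a b x : trig a b (x %% r) = trig a b x.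
Proof.
apply: eq_bigr => p _.
have angle_mod : freq p * x%:R = freq p * (x %% r)%:R + (pi *+ 2) *+ (f p * (x %/ r)).
  have r_neq0 : r%:R != 0 :> R by rewrite pnatr_eq0 -lt0n.
  by rewrite {1}(divn_eq x r) /freq -mulr_natr !natrD !natrM; field.
by rewrite angle_mod (periodicn (@cosD2pi R)) (periodicn (@sinD2pi R)).
Qed.

Variables (N K : nat) (al be : 'I_N -> T -> R) (CA CB : 'I_K -> T -> R).

Definition holE_entities : 'M[R]_(N, r) := \matrix_(i, t) trig (al i) (be i) t.

(* each of the two orthogonality sums below contributes a factor r / 2 *)
Definition holE_relations : 'M[R]_(K, r) :=
  \matrix_(k, m) ((2 / r%:R) ^+ 2 * trig (CA k) (CB k) m).

Lemma ccorr_holE_entities i j m :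
  ccorr (fun t => holE_entities i t) (fun t => holE_entities j t) m =
  r%:R / 2 * trig (fun p => al i p * al j p + be i p * be j p)
                  (fun p => al i p * be j p - be i p * al j p) m.
Proof.
rewrite /ccorr; transitivity (\sum_(t < r) trig (al i) (be i) t *
  trig (fun p => al j p * cos (freq p * m%:R) + be j p * sin (freq p * m%:R))
       (fun p => be j p * cos (freq p * m%:R) - al j p * sin (freq p * m%:R)) t).
  apply: eq_bigr => t _; rewrite /vget; case: insubP => [u _ u_val|]; last first.
    by rewrite ltn_pmod.
  by rewrite !mxE u_val trig_mod addnC trigD.
by rewrite sum_trig_mul; congr (_ * _); apply: eq_bigr => p _; ring.
Qed.

Lemma holE_tensor_trig k i j :
  holE_tensor holE_entities holE_relations k i j = complex_score al be CA CB k i j.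
Proof.
have r_neq0 : r%:R != 0 :> R by rewrite pnatr_eq0 -lt0n.
rewrite mxE; under eq_bigr do rewrite !mxE ccorr_holE_entities mulrACA.
rewrite -mulr_sumr sum_trig_mul mulrA -[RHS]mul1r; congr (_ * _); first by field.
by apply: eq_bigr => p _; ring.
Qed.

End TrigEmbedding.

Definition holE_consistent (R : realType) (N K r : nat) (B : 'I_K -> 'M[bool]_N) : Prop :=
  exists P : 'I_K -> 'M[nat]_N, in_pi_HolE R r P /\ consistent B P.

Lemma dense_rank_lt (R : realType) N (S : 'M[R]_N) i j i' j' :
  S i' j' < S i j -> (dense_rank S i j < dense_rank S i' j')%N.
Proof.
move=> lt_S; rewrite !mxE ltn_add2l.
set above_ij := undup _; set above_i'j' := undup _.
have uniq_ij : uniq (S i j :: above_ij).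
  rewrite /= undup_uniq andbT mem_undup; apply/mapP => -[p].
  by rewrite mem_filter => /andP[lt_p _] eq_p; rewrite eq_p ltxx in lt_p.
apply: (uniq_leq_size uniq_ij) => x; rewrite inE => /predU1P[->|].
  by rewrite mem_undup; apply/mapP; exists (i, j); rewrite // mem_filter lt_S mem_enum inE.
rewrite !mem_undup => /mapP[p]; rewrite mem_filter => /andP[lt_p p_in] ->.
by apply/mapP; exists p; rewrite // mem_filter (lt_trans lt_S lt_p).
Qed.

Lemma holE_consistent_of_separating (R : realType) N K r (B : 'I_K -> 'M[bool]_N)
    (S : 'I_K -> 'M[R]_N) : is_HolE r S ->
  (forall k i j i' j', B k i j -> ~~ B k i' j' -> S k i' j' < S k i j) ->
  holE_consistent R r B.
Proof.
move=> S_holE S_sep; exists (pi_tensor S); split; first by exists S.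
by move=> k i j i' j' /S_sep sep /negbT /sep /dense_rank_lt.
Qed.

Lemma holE_consistent_of_complex_score (R : realType) N K r (B : 'I_K -> 'M[bool]_N)
    (T : finType) (al be : 'I_N -> T -> R) (CA CB : 'I_K -> T -> R) :
  (2 * #|T| < r)%N ->
  (forall k i j i' j', B k i j -> ~~ B k i' j' ->
     complex_score al be CA CB k i' j' < complex_score al be CA CB k i j) ->
  holE_consistent R r B.
Proof.
move=> T_small score_sep; pose f (p : T) := (enum_rank p).+1.
have f_inj : injective f by move=> p q [/val_inj/enum_rank_inj].
have f_lt p : (2 * f p < r)%N.
  by apply: leq_ltn_trans T_small; rewrite leq_mul2l ltn_ord orbT.
have r_gt0 : (0 < r)%N by move: T_small; case: (r).
have f_gt0 p : (0 < f p)%N by [].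
apply: (@holE_consistent_of_separating _ _ _ _ _
  (holE_tensor (holE_entities r f al be) (holE_relations r f CA CB))).
  by do 2 eexists.
by move=> k i j i' j'; rewrite !(holE_tensor_trig r_gt0 f_inj f_gt0 f_lt); exact: score_sep.
Qed.

Lemma sum_pair (R : nmodType) (I J : finType) (F : I * J -> R) :
  \sum_p F p = \sum_i \sum_j F (i, j).
Proof. by rewrite pair_bigA; apply: eq_bigr => -[]. Qed.

Section FactoredSlices.
Variables (R : realType) (N K : nat) (rho : 'I_K -> nat).
Variables (U : forall k, 'M[R]_(N, rho k)) (V : forall k, 'M[R]_(rho k, N)).

Local Notation index := ({k : 'I_K & 'I_(rho k)} * bool)%type.

(* Together, the two coordinates of a rank-one term u v^T contribute its symmetric part
   ((u + v)(u + v)^T - (u - v)(u - v)^T) / 4 and its antisymmetric part (u v^T - v u^T) / 2. *)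
Definition factor_al (i : 'I_N) (p : index) : R :=
  (U (tag p.1) i (tagged p.1) + (-1) ^+ (~~ p.2) * V (tag p.1) (tagged p.1) i) / 2.
Definition factor_be (i : 'I_N) (p : index) : R := U (tag p.1) i (tagged p.1).
Definition factor_CA (k : 'I_K) (p : index) : R := (-1) ^+ (~~ p.2) * (k == tag p.1)%:R.
Definition factor_CB (k : 'I_K) (p : index) : R := (~~ p.2)%:R * (k == tag p.1)%:R.

Lemma complex_score_factor k i j :
  complex_score factor_al factor_be factor_CA factor_CB k i j = (U k *m V k) i j.
Proof.
rewrite mxE -(sumr_delta k (fun k' => \sum_l U k' i l * V k' l j)).
under eq_bigr do rewrite mulr_sumr.
rewrite sig_big_dep /complex_score sum_pair; apply: eq_bigr => x _.
by rewrite big_bool /factor_al /factor_be /factor_CA /factor_CB /=; field.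
Qed.

End FactoredSlices.

Lemma round_mxE (R : realType) m n (A : 'M[R]_(m, n)) i j :
  round_mx A i j = (1 / 2 <= A i j).
Proof. by rewrite mxE. Qed.

Lemma holE_consistent_rrank (R : realType) N K r (B : 'I_K -> 'M[bool]_N) :
  (4 * (\sum_(k < K) rrank R (B k)) + 1 <= r)%N -> holE_consistent R r B.
Proof.
move=> r_large.
have /boolp.choice[A A_min] k :
    exists A : 'M[R]_N, round_mx A = B k /\ \rank A = rrank R (B k).
  by rewrite /rrank; case: ex_minnP => d /asboolP.
pose U k := col_base (A k); pose V k := row_base (A k).
apply: (holE_consistent_of_complex_score (al := factor_al U V) (be := factor_be U)
          (CA := @factor_CA R K _) (CB := @factor_CB R K _)).
  rewrite card_prod card_bool card_tagged sumnE big_map big_enum /=.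
  under eq_bigr do rewrite card_ord (A_min _).2.
  rewrite (eq_bigl xpredT) // in r_large *; lia.
move=> k i j i' j'; rewrite !complex_score_factor !mulmx_base -(A_min k).1 !round_mxE.
by rewrite -ltNge => half_le half_gt; exact: lt_le_trans half_gt half_le.
Qed.

Section OneHotRows.
Variables (R : realType) (N K : nat) (B : 'I_K -> 'M[bool]_N).

Local Notation index := ('I_K * 'I_N)%type.
(* M = N + 1 beats the total error N / 2 + N / 2 *)
Local Notation M := (N%:R + 1 : R).

Definition diag_sign (k : 'I_K) (a : 'I_N) : R := (-1) ^+ (~~ B k a a).

Definition row_al (i : 'I_N) (p : index) : R :=
  (i == p.2)%:R * M + diag_sign p.1 p.2 / 2 * (B p.1 p.2 i)%:R.
Definition row_be (i : 'I_N) (p : index) : R := (B p.1 p.2 i)%:R / 2.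
Definition row_CA (k : 'I_K) (p : index) : R := (k == p.1)%:R * diag_sign p.1 p.2.
Definition row_CB (k : 'I_K) (p : index) : R := (k == p.1)%:R.

Definition row_error (k : 'I_K) (i j : 'I_N) : R :=
  \sum_a diag_sign k a / 2 * (B k a i)%:R * (B k a j)%:R.

Lemma complex_score_rows k i j :
  complex_score row_al row_be row_CA row_CB k i j =
  (j == i)%:R * diag_sign k i * M ^+ 2 + M * (B k i j)%:R + row_error k i j.
Proof.
rewrite /complex_score sum_pair.
transitivity (\sum_k' (k == k')%:R * \sum_a
    ((i == a)%:R * ((j == a)%:R * diag_sign k' a * M ^+ 2 + M * (B k' a j)%:R)
     + diag_sign k' a / 2 * (B k' a i)%:R * (B k' a j)%:R)).
  apply: eq_bigr => k' _; rewrite mulr_sumr; apply: eq_bigr => a _.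
  by rewrite /row_al /row_be /row_CA /row_CB /diag_sign /=; case: (B _ a a) => /=; field.
by rewrite sumr_delta big_split /= sumr_delta.
Qed.

Lemma row_error_bound k i j : `|row_error k i j| <= N%:R / 2.
Proof.
apply: le_trans (ler_norm_sum _ _ _) _.
have -> : N%:R / 2 = \sum_(a < N) (1 / 2 : R).
  by rewrite sumr_const card_ord -[RHS]mulr_natl mul1r.
apply: ler_sum => a _; rewrite /diag_sign.
rewrite !normrM normrX normrN normr1 expr1n mul1r !normr_nat ger0_norm ?invr_ge0 ?ler0n //.
by case: (B k a i) (B k a j) => [] [] /=; lra.
Qed.

Lemma complex_score_rows_sep k i j i' j' : B k i j -> ~~ B k i' j' ->
  complex_score row_al row_be row_CA row_CB k i' j' <
  complex_score row_al row_be row_CA row_CB k i j.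
Proof.
move=> Bij Bi'j'; rewrite !complex_score_rows Bij (negbTE Bi'j').
have diag_ge0 : 0 <= (j == i)%:R * diag_sign k i * M ^+ 2.
  case: (eqVneq j i) Bij => [->|_] Bii; last by rewrite !mul0r.
  by rewrite /diag_sign Bii !mul1r sqr_ge0.
have diag_le0 : (j' == i')%:R * diag_sign k i' * M ^+ 2 <= 0.
  case: (eqVneq j' i') Bi'j' => [->|_] Bi'i'; last by rewrite !mul0r.
  by rewrite /diag_sign Bi'i' mul1r mulN1r oppr_le0 sqr_ge0.
have := row_error_bound k i j; have := row_error_bound k i' j'; rewrite !ler_norml.
have N_ge0 : 0 <= N%:R :> R by [].
move=> /andP[_ err_hi] /andP[err_lo _] /=; lra.
Qed.

End OneHotRows.

Lemma holE_consistent_KN (R : realType) N K r (B : 'I_K -> 'M[bool]_N) :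
  (2 * K * N + 1 <= r)%N -> holE_consistent R r B.
Proof.
move=> r_large; apply: (holE_consistent_of_complex_score (al := row_al R B) (be := row_be R B)
  (CA := row_CA R B) (CB := @row_CB R N K)); last exact: complex_score_rows_sep.
by rewrite card_prod !card_ord; lia.
Qed.

Theorem corollary4 (R : realType) (N K : nat) (hN : (2 <= N)%N) (hK : (1 <= K)%N)
  (B : 'I_K -> 'M[bool]_N) (r : nat) (hr : (0 < r)%N)
  (hmin : (minn (2 * K * N + 1) (4 * (\sum_(k < K) rrank R (B k)) + 1) <= r)%N) :
  exists P : 'I_K -> 'M[nat]_N, in_pi_HolE R r P /\ consistent B P.
Proof.
move: hmin; rewrite geq_min => /orP[KN_le|rrank_le].
- exact: holE_consistent_KN.
- exact: holE_consistent_rrank.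
Qed.
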